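(* Let $M := \langle x,y,z \mid (xy,\, yzx)\rangle$. (1) For all $k,l\in\mathbb{N}^+$, $\mathsf{L}_M(x^ky^l) = [k+l,\ 2(k+l)-1]$. (2) For all $k,l\in\mathbb{N}^+$, $\rho(\mathsf{L}_M(x^ky^l)) = 2 - \frac{1}{k+l}$. (3) For every integer $n\ge 2$ and all $k,l\in\mathbb{N}^+$ with $k+l=n$, one has $\rho(\mathsf{L}_M(a)) \le \rho(\mathsf{L}_M(x^ky^l))$ for every word $a\in\langle x,y,z\rangle$ with $|a| = n$.
   Context: $\langle x,y,z\rangle$ is the free monoid on $\{x,y,z\}$, and $M$ is the monoid with generators $x,y,z$ subject to the single relation $xy = yzx$. $|a|$ is word length; $a=_M b$ means equal images in $M$; $\mathsf{L}_M(a):=\{|b| : b\in\langle x,y,z\rangle,\ b=_M a\}$. $[s,t]$ denotes the set of integers between $s$ and $t$. For $L\subseteq\mathbb{N}$ with $L\cap\mathbb{N}^+\neq\emptyset$, $\rho(L):=\sup(L\cap\mathbb{N}^+)/\min(L\cap\mathbb{N}^+)$. *)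

From Stdlib Require Import Relations.
From mathcomp Require Import all_boot all_order all_algebra.
From mathcomp Require Import all_classical all_reals all_analysis.
Set Implicit Arguments. Unset Strict Implicit. Unset Printing Implicit Defensive.
Import Order.TTheory GRing.Theory Num.Theory.

(* The alphabet {x,y,z}; words of the free monoid <x,y,z> are seq letter. *)
Inductive letter := X | Y | Z.

Inductive stepM : seq letter -> seq letter -> Prop :=
  | stepM_intro (u v : seq letter) :
      stepM (u ++ [:: X; Y] ++ v) (u ++ [:: Y; Z; X] ++ v).

(* a =_M b : equality in M = <x,y,z | xy = yzx>, i.e. the congruence
   generated by (xy, yzx) = equivalence closure of the contextual step. *)
Definition eqM : relation (seq letter) := clos_refl_sym_trans _ stepM.

Definition LM (a : seq letter) : set nat := [set n | exists b, eqM b a /\ size b = n].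

Definition minpos (L : set nat) : nat :=
  match pselect (exists n, `[< L n /\ (0 < n)%N >]) with
  | left h => ex_minn h
  | right _ => 0%N
  end.

Local Open Scope ring_scope.
Local Open Scope ereal_scope.
(* rho(L) = sup (L ∩ N^+) / min (L ∩ N^+), as an extended real
   (equal to +oo when L ∩ N^+ is unbounded). *)
Definition rho {R : realType} (L : set nat) : \bar R :=
  ereal_sup [set ((m%:R / (minpos L)%:R)%R)%:E | m in [set m | L m /\ (0 < m)%N]].

(* Every rewriting step xy -> yzx preserves the numbers of x's and y's, adds one z and
   lowers by one a potential that is at most |w| - 1.  Hence #z + potential is invariant,
   and any b =_M a satisfies |a|_x + |a|_y <= |b| <= |a| + potential a <= 2|a| - 1.  For
   x^k y^l every length in between is realised by pushing y's, then x's, through the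
   relation.  Applying |b| <= 2|a| - 1 to a shortest representative of a's class gives
   rho(L_M(a)) <= 2 - 1/|a|. *)
From Stdlib Require Import Relations.
From mathcomp Require Import all_boot all_order all_algebra.
From mathcomp Require Import all_classical all_reals all_analysis.
From mathcomp Require Import zify lra.
Import Order.TTheory GRing.Theory Num.Theory.

Set Implicit Arguments.
Unset Strict Implicit.
Unset Printing Implicit Defensive.

Definition is_x c := if c is X then true else false.
Definition is_y c := if c is Y then true else false.
Definition is_z c := if c is Z then true else false.

Lemma size_count_letters w : size w = (count is_x w + count is_y w + count is_z w)%N.
Proof. by elim: w => [|[] w IH] //=; lia. Qed.

Lemma eqM_cat u v a b : eqM a b -> eqM (u ++ a ++ v) (u ++ b ++ v).
Proof.
elim=> {a b} [_ _ [u' v'] | a | a b _ IH | a b c _ IH1 _ IH2].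
- by apply: rst_step; rewrite !catA -!(catA (u ++ u')); apply: stepM_intro.
- exact: rst_refl.
- exact: rst_sym.
- exact: rst_trans IH2.
Qed.

Lemma eqM_cons c a b : eqM a b -> eqM (c :: a) (c :: b).
Proof. by move/(eqM_cat [:: c] [::]); rewrite !cats0. Qed.

Lemma eqM_xy v : eqM ([:: X; Y] ++ v) ([:: Y; Z] ++ X :: v).
Proof. by apply: rst_step; apply: (stepM_intro [::] v). Qed.

Lemma eqM_x_ys i j :
  eqM (X :: nseq (i + j) Y) (flatten (nseq i [:: Y; Z]) ++ X :: nseq j Y).
Proof.
elim: i => [|i IH]; first exact: rst_refl.
apply: rst_trans (eqM_xy (nseq (i + j) Y)) _.
by have := eqM_cat [:: Y; Z] [::] IH; rewrite !cats0 catA.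
Qed.

Lemma eqM_xs_yz b :
  eqM (nseq b X ++ [:: Y; Z]) ([:: Y; Z] ++ flatten (nseq b [:: X; Z])).
Proof.
elim: b => [|b IH]; first by rewrite cats0; exact: rst_refl.
apply: rst_trans (eqM_cons X IH) _.
exact: (eqM_xy (Z :: flatten (nseq b [:: X; Z]))).
Qed.

Lemma size_flatten_nseq (T : Type) n (s : seq T) :
  size (flatten (nseq n s)) = (n * size s)%N.
Proof. by rewrite size_flatten /shape map_nseq sumn_nseq mulnC. Qed.

(* [potential w] counts the cut points of w that follow an x with no z after it and are
   followed by a word starting with x^* y; the step xy -> yzx removes exactly the cut
   between the rewritten x and y.  [x_open] maintains the flag "an x since the last z". *)
Fixpoint starts_xsy (v : seq letter) : bool :=
  if v is c :: v' then
    match c with X => starts_xsy v' | Y => true | Z => false end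
  else false.

Definition x_open (b : bool) c := match c with X => true | Y => b | Z => false end.

Fixpoint potential_from (b : bool) (v : seq letter) : nat :=
  if v is c :: v' then ((b && starts_xsy v) + potential_from (x_open b c) v')%N
  else 0%N.

Definition potential w := potential_from false w.

Lemma starts_xsy_step u v :
  starts_xsy (u ++ [:: X, Y & v]) = starts_xsy (u ++ [:: Y, Z, X & v]).
Proof. by elim: u => [|[] u IH]. Qed.

Lemma potential_from_step b u v :
  potential_from b (u ++ [:: X, Y & v]) = (potential_from b (u ++ [:: Y, Z, X & v])).+1.
Proof.
elim: u b => [|c u IH] b /=; last by rewrite IH starts_xsy_step addnS.
by rewrite !andbT !andbF; lia.
Qed.

Lemma potential_from_le b v : (potential_from b v <= size v)%N.
Proof. by elim: v b => [|c v IH] b //=; rewrite -add1n leq_add ?leq_b1. Qed.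

Lemma potential_le w : (potential w <= size w - 1)%N.
Proof. by case: w => [|c w] //=; rewrite subn1; apply: potential_from_le. Qed.

Lemma eqM_invariants a b : eqM a b ->
  [/\ count is_x a = count is_x b, count is_y a = count is_y b &
      (count is_z a + potential a = count is_z b + potential b)%N].
Proof.
elim=> {a b} [_ _ [u v] | // | a b _ [*] | a b c _ [? ? ?] _ [? ? ?]]; try by split.
- by rewrite /potential !count_cat /= potential_from_step; split; lia.
- by split; lia.
Qed.

Lemma size_eqM_ge a b : eqM b a -> (count is_x a + count is_y a <= size b)%N.
Proof. by case/eqM_invariants=> <- <- _; rewrite size_count_letters leq_addr. Qed.

Lemma size_eqM_le a b : eqM b a -> (size b <= 2 * size a - 1)%N.
Proof.
case/eqM_invariants=> hx hy hz; have := potential_le a.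
by rewrite !size_count_letters; lia.
Qed.

Lemma eqM_xys_yzs k l i : (i <= l)%N ->
  eqM (nseq k X ++ flatten (nseq i [:: Y; Z]) ++ X :: nseq (l - i) Y)
      (nseq k.+1 X ++ nseq l Y).
Proof.
move=> il; apply: rst_sym; rewrite -[in nseq l Y](subnKC il) -addn1 nseqD -catA.
by have := eqM_cat (nseq k X) [::] (eqM_x_ys i (l - i)); rewrite !cats0.
Qed.

Lemma eqM_xys_xzs k l b : (b <= k)%N ->
  eqM (nseq (k - b) X ++ [:: Y; Z] ++ flatten (nseq b [:: X; Z])
         ++ flatten (nseq l [:: Y; Z]) ++ [:: X])
      (nseq k.+1 X ++ nseq l.+1 Y).
Proof.
move=> bk; have := eqM_xys_yzs k (leqnn l.+1); rewrite subnn; apply: rst_trans.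
rewrite -[in nseq k X](subnK bk) nseqD -!catA; apply: rst_sym.
by have := eqM_cat (nseq (k - b) X) (flatten (nseq l [:: Y; Z]) ++ [:: X]) (eqM_xs_yz b);
  rewrite -!catA.
Qed.

Lemma LM_xy k l : (0 < k)%N -> (0 < l)%N ->
  LM (nseq k X ++ nseq l Y) = [set n : nat | (k + l <= n <= 2 * (k + l) - 1)%N]%classic.
Proof.
move=> k_gt0 l_gt0; apply/seteqP; split=> n /=.
  move=> [b [bw <-]]; have := size_eqM_le bw; have := size_eqM_ge bw.
  by rewrite size_cat !count_cat !count_nseq !size_nseq /=; lia.
case: k l k_gt0 l_gt0 => // k [//|l] _ _ /andP[n_ge n_le].
have [n_small | n_large] := leqP n (k.+1 + 2 * l.+1).
  set i := (n - (k.+1 + l.+1))%N.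
  exists (nseq k X ++ flatten (nseq i [:: Y; Z]) ++ X :: nseq (l.+1 - i) Y).
  split; first by apply: eqM_xys_yzs; lia.
  by rewrite !size_cat size_nseq size_flatten_nseq /= size_nseq; lia.
set b := (n - (k.+1 + 2 * l.+1))%N.
exists (nseq (k - b) X ++ [:: Y; Z] ++ flatten (nseq b [:: X; Z])
        ++ flatten (nseq l [:: Y; Z]) ++ [:: X]).
split; first by apply: eqM_xys_xzs; lia.
by rewrite !size_cat size_nseq !size_flatten_nseq /=; lia.
Qed.

Lemma minpos_spec (L : set nat) : (exists n, L n /\ (0 < n)%N) ->
  [/\ L (minpos L), (0 < minpos L)%N & forall n, L n -> (0 < n)%N -> (minpos L <= n)%N].
Proof.
move=> [n0 [Ln0 n0_gt0]]; rewrite /minpos; case: pselect => [h|[]]; last first.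
  by exists n0; apply/asboolP.
by case: ex_minnP => m /asboolP [Lm m_gt0] m_min; split=> // n Ln n_gt0; apply/m_min/asboolP.
Qed.

Lemma minpos_eq (L : set nat) m : L m -> (0 < m)%N ->
  (forall n, L n -> (0 < n)%N -> (m <= n)%N) -> minpos L = m.
Proof.
move=> Lm m_gt0 m_min; have [Lp p_gt0 p_min] := minpos_spec (ex_intro _ m (conj Lm m_gt0)).
by apply/eqP; rewrite eqn_leq p_min ?m_min.
Qed.

Local Open Scope ring_scope.

Lemma ratio_le_two_subV (R : realFieldType) (m' m n : nat) : (0 < m)%N -> (m <= n)%N ->
  (m' <= 2 * m - 1)%N -> m'%:R / m%:R <= 2 - n%:R^-1 :> R.
Proof.
move=> m_gt0 mn m'_le; have m0 : 0 < m%:R :> R by rewrite ltr0n.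
have n0 : 0 < n%:R :> R by rewrite ltr0n (leq_trans m_gt0).
have mn_ratio : m%:R / n%:R <= 1 :> R by rewrite ler_pdivrMr // mul1r ler_nat.
have m'_le_R : m'%:R <= 2 * m%:R - 1 :> R.
  by move: m'_le; rewrite -(ler_nat R) natrB ?muln_gt0 // natrM.
rewrite ler_pdivrMr // mulrBl; rewrite mulrC in mn_ratio; lra.
Qed.

Lemma ratio_two_subV (R : numFieldType) (N : nat) : (0 < N)%N ->
  (2 * N - 1)%:R / N%:R = 2 - N%:R^-1 :> R.
Proof.
move=> N_gt0; have N0 : N%:R != 0 :> R by rewrite pnatr_eq0 -lt0n.
by rewrite natrB ?muln_gt0 // natrM mulrBl mulfK // mul1r.
Qed.

Local Open Scope ereal_scope.

Lemma rho_le_two_subV (R : realType) (L : set nat) (N : nat) :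
  (exists n, L n /\ (0 < n)%N) -> (minpos L <= N)%N ->
  (forall n, L n -> (0 < n)%N -> (n <= 2 * minpos L - 1)%N) ->
  @rho R L <= (2 - N%:R^-1)%:E.
Proof.
move=> L_pos mN L_le; have [_ m_gt0 _] := minpos_spec L_pos.
apply: ge_ereal_sup => _ [n [Ln n_gt0] <-]; rewrite lee_fin.
exact: ratio_le_two_subV (L_le n Ln n_gt0).
Qed.

Lemma rho_ge (R : realType) (L : set nat) (n : nat) : L n -> (0 < n)%N ->
  ((n%:R / (minpos L)%:R)%R)%:E <= @rho R L.
Proof. by move=> Ln n_gt0; apply: ereal_sup_ubound; exists n. Qed.

Lemma rho_LM_xy (R : realType) k l : (0 < k)%N -> (0 < l)%N ->
  @rho R (LM (nseq k X ++ nseq l Y)) = (2 - ((k + l)%:R)^-1)%:E.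
Proof.
move=> k_gt0 l_gt0; rewrite LM_xy //; set S := [set n | _]%classic.
have kl_gt0 : (0 < k + l)%N by rewrite addn_gt0 k_gt0.
have S_kl : S (k + l)%N by rewrite /S /= leqnn; lia.
have S_max : S (2 * (k + l) - 1)%N by rewrite /S /= leqnn andbT; lia.
have m_eq : minpos S = (k + l)%N by apply: minpos_eq => // n /andP[].
apply/eqP; rewrite eq_le rho_le_two_subV ?m_eq //=; last first.
- by move=> n /andP[].
- by exists (k + l)%N.
by rewrite -ratio_two_subV // -m_eq rho_ge ?m_eq //; lia.
Qed.

Lemma rho_LM_le (R : realType) (a : seq letter) : (0 < size a)%N ->
  @rho R (LM a) <= (2 - (size a)%:R^-1)%:E.
Proof.
move=> a_gt0; have La : LM a (size a) by exists a; split=> //; apply: rst_refl.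
have [[w [wa size_w]] _ m_min] := minpos_spec (ex_intro _ _ (conj La a_gt0)).
apply: rho_le_two_subV; [by exists (size a) | exact: m_min | ].
move=> _ [b [ba <-]] _; rewrite -size_w; apply: size_eqM_le.
by apply: rst_trans ba _; apply: rst_sym.
Qed.

Theorem lemma6p2 (R : realType) :
  (forall k l : nat, (0 < k)%N -> (0 < l)%N ->
     LM (nseq k X ++ nseq l Y) = [set n : nat | (k + l <= n <= 2 * (k + l) - 1)%N]%classic) /\
  (forall k l : nat, (0 < k)%N -> (0 < l)%N ->
     @rho R (LM (nseq k X ++ nseq l Y)) = (2 - ((k + l)%:R)^-1)%:E) /\
  (forall n : nat, (2 <= n)%N -> forall k l : nat, (0 < k)%N -> (0 < l)%N ->
     (k + l = n)%N -> forall a : seq letter, size a = n ->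
     @rho R (LM a) <= @rho R (LM (nseq k X ++ nseq l Y))).
Proof.
split; first exact: LM_xy.
split; first exact: rho_LM_xy.
move=> n n_ge2 k l k_gt0 l_gt0 kln a size_a.
by rewrite rho_LM_xy // kln -size_a rho_LM_le // size_a ltnW.
Qed.
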